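(* Let $A,B\in\mathbb{R}$ and let $f=f_1+f_2\mathbf{j}$ on $\mathbb{H}\cong\mathbb{C}^2$ with $f_1=z_1+\overline z_1+z_2+\overline z_2+A$ and $f_2=-z_1-\overline z_1+z_2+\overline z_2+B$. Then $f$ is hyperholomorphic, and its right inverse $f^{-1}$ is hyperholomorphic outside the zero set of $f$. Moreover, for $A=B=0$, the zero set of $f$ is $\{x_1=0,\ x_2=0\}\subset\mathbb{R}^4$, where $z_k=x_k+iy_k$ with $x_k,y_k\in\mathbb{R}$.
   Context: Quaternions are written $q=z_1+z_2\mathbf{j}$ with $z_1,z_2\in\mathbb{C}$, $\mathbf{j}^2=-1$, $z\mathbf{j}=\mathbf{j}\overline z$ for $z\in\mathbb{C}$. A function $f:U\to\mathbb{H}$ is written $f=f_1+f_2\mathbf{j}$ with $f_1,f_2$ complex valued. The right inverse of $f$ is $f^{-1}=(|f_1|^2+|f_2|^2)^{-1}(\overline f_1-f_2\mathbf{j})$, defined where $f\neq0$. The modified Cauchy–Fueter operator is $\mathcal{D}f=\frac12\big(\frac{\partial f_1}{\partial\overline z_1}-\frac{\partial\overline f_2}{\partial z_2}\big)+\mathbf{j}\,\frac12\big(\frac{\partial f_1}{\partial\overline z_2}+\frac{\partial\overline f_2}{\partial z_1}\big)$, and $f$ is hyperholomorphic if $\mathcal{D}f=0$. *)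

From Stdlib Require Import Reals.
From Coquelicot Require Import Coquelicot.
Open Scope R_scope.

(* A point of H ~ C^2 is a pair (z1, z2) : C * C; a quaternion q = z1 + z2 j
   is likewise represented as the pair (z1, z2). *)
Definition quat := (C * C)%type.

Definition qinv (q : quat) : quat :=
  let N := RtoC (Cmod (fst q) ^ 2 + Cmod (snd q) ^ 2) in
  (Cdiv (Cconj (fst q)) N, Cdiv (Copp (snd q)) N).

Definition pderiv (g : C * C -> C) (p v : C * C) (l : C) : Prop :=
  is_derive (fun t : R => g (Cplus (fst p) (Cmult (RtoC t) (fst v)),
                             Cplus (snd p) (Cmult (RtoC t) (snd v)))) 0 l.

Definition e_x1 : C * C := (RtoC 1, RtoC 0).
Definition e_y1 : C * C := (Ci, RtoC 0).
Definition e_x2 : C * C := (RtoC 0, RtoC 1).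
Definition e_y2 : C * C := (RtoC 0, Ci).

Definition dzbar1 (g : C * C -> C) (p : C * C) (d : C) : Prop :=
  exists gx gy, pderiv g p e_x1 gx /\ pderiv g p e_y1 gy /\
    d = Cmult (RtoC (/2)) (Cplus gx (Cmult Ci gy)).
Definition dzbar2 (g : C * C -> C) (p : C * C) (d : C) : Prop :=
  exists gx gy, pderiv g p e_x2 gx /\ pderiv g p e_y2 gy /\
    d = Cmult (RtoC (/2)) (Cplus gx (Cmult Ci gy)).
Definition dz1 (g : C * C -> C) (p : C * C) (d : C) : Prop :=
  exists gx gy, pderiv g p e_x1 gx /\ pderiv g p e_y1 gy /\
    d = Cmult (RtoC (/2)) (Cminus gx (Cmult Ci gy)).
Definition dz2 (g : C * C -> C) (p : C * C) (d : C) : Prop :=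
  exists gx gy, pderiv g p e_x2 gx /\ pderiv g p e_y2 gy /\
    d = Cmult (RtoC (/2)) (Cminus gx (Cmult Ci gy)).

(* Modified Cauchy-Fueter operator: (D f)(p) = a + j b, where
   a = 1/2 (df1/dzbar1 - d(conj f2)/dz2), b = 1/2 (df1/dzbar2 + d(conj f2)/dz1);
   the relation includes existence of the needed partial derivatives. *)
Definition CF_op (f : C * C -> quat) (p : C * C) (a b : C) : Prop :=
  let f1 := fun z => fst (f z) in
  let f2c := fun z => Cconj (snd (f z)) in
  exists d1 d2 d3 d4,
    dzbar1 f1 p d1 /\ dz2 f2c p d2 /\ dzbar2 f1 p d3 /\ dz1 f2c p d4 /\
    a = Cmult (RtoC (/2)) (Cminus d1 d2) /\
    b = Cmult (RtoC (/2)) (Cplus d3 d4).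

Definition hyperholomorphic_on (U : C * C -> Prop) (f : C * C -> quat) : Prop :=
  forall p, U p -> CF_op f p (RtoC 0) (RtoC 0).

From Stdlib Require Import Reals Lra FunctionalExtensionality.
From Coquelicot Require Import Coquelicot.

(* Both components of [f] are real: [f = u + w j] with [u = 2 x1 + 2 x2 + A] and
   [w = -2 x1 + 2 x2 + B].  For real-valued [u], [w] the equation [D f = 0] reduces to
   [u_x1 = w_x2], [u_y1 = - w_y2], [u_x2 = - w_x1], [u_y2 = w_y1], and the right inverse
   [(u - w j) / (u^2 + w^2)] is again real-valued.  The quotient rule shows that
   [(u / N, - w / N)], [N = u^2 + w^2], satisfies the same four equations wherever
   [N <> 0]; in the [x]-variables this is the fact that [-1 / h] is holomorphic with
   [h = w + i u], a holomorphic function of [x2 + i x1]. *)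

Definition line (p v : C * C) (t : R) : C * C :=
  (Cplus (fst p) (Cmult (RtoC t) (fst v)), Cplus (snd p) (Cmult (RtoC t) (snd v))).

Lemma line_0 (p v : C * C) : line p v 0 = p.
Proof.
destruct p as [[a1 b1] [a2 b2]]; destruct v as [[c1 d1] [c2 d2]].
unfold line; simpl; f_equal; apply injective_projections; simpl; ring.
Qed.

Definition rpderiv (g : C * C -> R) (p v : C * C) (l : R) : Prop :=
  is_derive (fun t => g (line p v t)) 0 l.

Definition real_quat (u w : R) : quat := (RtoC u, RtoC w).

Lemma real_quat_eq0 (u w : R) : real_quat u w = (RtoC 0, RtoC 0) <-> u = 0 /\ w = 0.
Proof.
unfold real_quat; split.
- intro E; injection E; auto.
- now intros [-> ->].
Qed.

Lemma real_quat_neq0 (u w : R) : real_quat u w <> (RtoC 0, RtoC 0) -> u ^ 2 + w ^ 2 <> 0.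
Proof.
intros Hnz HN; apply Hnz, real_quat_eq0; split; nra.
Qed.

(* No hypothesis needed: at [u = w = 0] both sides are [0], as division by [0] returns [0]. *)
Lemma qinv_real_quat (u w : R) :
  qinv (real_quat u w) = real_quat (u / (u ^ 2 + w ^ 2)) (- w / (u ^ 2 + w ^ 2)).
Proof.
unfold qinv, real_quat; simpl fst; simpl snd.
rewrite !Cmod_R, !pow2_abs.
unfold Cdiv, Cmult, Cinv, Cconj, Copp, RtoC; cbn [fst snd].
destruct (Req_dec (u ^ 2 + w ^ 2) 0) as [HN | HN].
- assert (u = 0 /\ w = 0) as [-> ->] by (split; nra).
  f_equal; apply injective_projections; cbn [fst snd]; unfold Rdiv; ring.
- f_equal; apply injective_projections; cbn [fst snd]; field; exact HN.
Qed.

Lemma is_derive_pair (u w : R -> R) (x a b : R) :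
  is_derive u x a -> is_derive w x b -> is_derive (fun t => (u t, w t) : C) x ((a, b) : C).
Proof.
intros Hu Hw; unfold is_derive in *.
refine (filterdiff_comp'_2 u w (fun x y => (x, y)) x _ _ (fun x y => (x, y)) Hu Hw _).
apply (filterdiff_ext_lin _ (fun t => t)).
- apply filterdiff_ext with (fun t => t); [intros [p q]; reflexivity | apply filterdiff_id].
- intros [p q]; reflexivity.
Qed.

Lemma pderiv_RtoC (g : C * C -> R) (p v : C * C) (l : R) :
  rpderiv g p v l -> pderiv (fun q => RtoC (g q)) p v (RtoC l).
Proof. intro H; exact (is_derive_pair _ _ _ _ _ H (is_derive_const 0 0)). Qed.

Lemma pderiv_conj_RtoC (g : C * C -> R) (p v : C * C) (l : R) :
  rpderiv g p v l -> pderiv (fun q => Cconj (RtoC (g q))) p v (RtoC l).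
Proof. intro H; exact (is_derive_pair _ _ _ _ _ H (is_derive_const (- 0) 0)). Qed.

Lemma CF_op_real_quat (u w : C * C -> R) (p : C * C)
    (ux1 uy1 ux2 uy2 wx1 wy1 wx2 wy2 : R) :
  rpderiv u p e_x1 ux1 -> rpderiv u p e_y1 uy1 ->
  rpderiv u p e_x2 ux2 -> rpderiv u p e_y2 uy2 ->
  rpderiv w p e_x1 wx1 -> rpderiv w p e_y1 wy1 ->
  rpderiv w p e_x2 wx2 -> rpderiv w p e_y2 wy2 ->
  CF_op (fun q => real_quat (u q) (w q)) p
    (((ux1 - wx2) / 4, (uy1 + wy2) / 4) : C) (((ux2 + wx1) / 4, (uy2 - wy1) / 4) : C).
Proof.
intros Hux1 Huy1 Hux2 Huy2 Hwx1 Hwy1 Hwx2 Hwy2.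
exists ((ux1 / 2, uy1 / 2) : C), ((wx2 / 2, - wy2 / 2) : C),
       ((ux2 / 2, uy2 / 2) : C), ((wx1 / 2, - wy1 / 2) : C).
split; [|split; [|split; [|split; [|split]]]].
- exists (RtoC ux1), (RtoC uy1); split; [|split]; try now apply pderiv_RtoC.
  apply injective_projections; simpl; field.
- exists (RtoC wx2), (RtoC wy2); split; [|split]; try now apply pderiv_conj_RtoC.
  apply injective_projections; simpl; field.
- exists (RtoC ux2), (RtoC uy2); split; [|split]; try now apply pderiv_RtoC.
  apply injective_projections; simpl; field.
- exists (RtoC wx1), (RtoC wy1); split; [|split]; try now apply pderiv_conj_RtoC.
  apply injective_projections; simpl; field.
- apply injective_projections; simpl; field.
- apply injective_projections; simpl; field.
Qed.

Definition real_cauchy_fueter (u w : C * C -> R) (p : C * C) : Prop :=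
  exists ux1 uy1 ux2 uy2 wx1 wy1 wx2 wy2,
    rpderiv u p e_x1 ux1 /\ rpderiv u p e_y1 uy1 /\
    rpderiv u p e_x2 ux2 /\ rpderiv u p e_y2 uy2 /\
    rpderiv w p e_x1 wx1 /\ rpderiv w p e_y1 wy1 /\
    rpderiv w p e_x2 wx2 /\ rpderiv w p e_y2 wy2 /\
    ux1 = wx2 /\ uy1 = - wy2 /\ ux2 = - wx1 /\ uy2 = wy1.

Lemma CF_op_real_cauchy_fueter (u w : C * C -> R) (p : C * C) :
  real_cauchy_fueter u w p -> CF_op (fun q => real_quat (u q) (w q)) p (RtoC 0) (RtoC 0).
Proof.
intros (ux1 & uy1 & ux2 & uy2 & wx1 & wy1 & wx2 & wy2 &
        Hux1 & Huy1 & Hux2 & Huy2 & Hwx1 & Hwy1 & Hwx2 & Hwy2 & -> & -> & -> & ->).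
assert (Ha : (((wx2 - wx2) / 4, (- wy2 + wy2) / 4) : C) = RtoC 0)
  by (apply injective_projections; simpl; field).
assert (Hb : (((- wx1 + wx1) / 4, (wy1 - wy1) / 4) : C) = RtoC 0)
  by (apply injective_projections; simpl; field).
rewrite <- Ha at 1; rewrite <- Hb.
now apply CF_op_real_quat.
Qed.

Lemma is_derive_div_norm2 (g h : R -> R) (x a b : R) :
  is_derive g x a -> is_derive h x b -> g x ^ 2 + h x ^ 2 <> 0 ->
  is_derive (fun t => g t / (g t ^ 2 + h t ^ 2)) x
    ((a * (h x ^ 2 - g x ^ 2) - 2 * g x * h x * b) / (g x ^ 2 + h x ^ 2) ^ 2).
Proof.
intros Hg Hh HN.
assert (HdN : is_derive (fun t => g t ^ 2 + h t ^ 2) x (2 * g x * a + 2 * h x * b)).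
{ replace (2 * g x * a + 2 * h x * b)
    with (plus (INR 2 * a * g x ^ Nat.pred 2) (INR 2 * b * h x ^ Nat.pred 2))
    by (simpl; unfold plus; simpl; ring).
  apply (is_derive_plus (fun t => g t ^ 2) (fun t => h t ^ 2)); now apply is_derive_pow. }
replace ((a * (h x ^ 2 - g x ^ 2) - 2 * g x * h x * b) / (g x ^ 2 + h x ^ 2) ^ 2)
  with ((a * (g x ^ 2 + h x ^ 2) - g x * (2 * g x * a + 2 * h x * b)) / (g x ^ 2 + h x ^ 2) ^ 2)
  by (field; exact HN).
exact (is_derive_div g (fun t => g t ^ 2 + h t ^ 2) x a _ Hg HdN HN).
Qed.

Lemma rpderiv_div_norm2 (u w : C * C -> R) (p v : C * C) (a b : R) :
  rpderiv u p v a -> rpderiv w p v b -> u p ^ 2 + w p ^ 2 <> 0 ->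
  rpderiv (fun q => u q / (u q ^ 2 + w q ^ 2)) p v
    ((a * (w p ^ 2 - u p ^ 2) - 2 * u p * w p * b) / (u p ^ 2 + w p ^ 2) ^ 2).
Proof.
intros Hu Hw HN.
pose proof (is_derive_div_norm2 (fun t => u (line p v t)) (fun t => w (line p v t)) 0 a b Hu Hw)
  as H.
cbv beta in H; rewrite line_0 in H.
exact (H HN).
Qed.

Lemma rpderiv_opp_div_norm2 (u w : C * C -> R) (p v : C * C) (a b : R) :
  rpderiv u p v a -> rpderiv w p v b -> u p ^ 2 + w p ^ 2 <> 0 ->
  rpderiv (fun q => - w q / (u q ^ 2 + w q ^ 2)) p v
    ((b * (w p ^ 2 - u p ^ 2) + 2 * u p * w p * a) / (u p ^ 2 + w p ^ 2) ^ 2).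
Proof.
intros Hu Hw HN.
assert (HN' : w p ^ 2 + u p ^ 2 <> 0) by lra.
pose proof (is_derive_opp _ _ _ (rpderiv_div_norm2 w u p v b a Hw Hu HN')) as H.
change (opp ?y) with (Ropp y) in H.
replace ((b * (w p ^ 2 - u p ^ 2) + 2 * u p * w p * a) / (u p ^ 2 + w p ^ 2) ^ 2)
  with (- ((b * (u p ^ 2 - w p ^ 2) - 2 * w p * u p * a) / (w p ^ 2 + u p ^ 2) ^ 2))
  by (field; auto).
refine (is_derive_ext _ _ _ _ _ H).
intro t; simpl; rewrite (Rplus_comm (w _ * _)); unfold Rdiv; ring.
Qed.

Lemma real_cauchy_fueter_inv (u w : C * C -> R) (p : C * C) :
  real_cauchy_fueter u w p -> u p ^ 2 + w p ^ 2 <> 0 ->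
  real_cauchy_fueter (fun q => u q / (u q ^ 2 + w q ^ 2)) (fun q => - w q / (u q ^ 2 + w q ^ 2)) p.
Proof.
intros (ux1 & uy1 & ux2 & uy2 & wx1 & wy1 & wx2 & wy2 &
        Hux1 & Huy1 & Hux2 & Huy2 & Hwx1 & Hwy1 & Hwx2 & Hwy2 & Ex1 & Ey1 & Ex2 & Ey2) HN.
do 8 eexists.
split; [exact (rpderiv_div_norm2 _ _ _ _ _ _ Hux1 Hwx1 HN) |].
split; [exact (rpderiv_div_norm2 _ _ _ _ _ _ Huy1 Hwy1 HN) |].
split; [exact (rpderiv_div_norm2 _ _ _ _ _ _ Hux2 Hwx2 HN) |].
split; [exact (rpderiv_div_norm2 _ _ _ _ _ _ Huy2 Hwy2 HN) |].
split; [exact (rpderiv_opp_div_norm2 _ _ _ _ _ _ Hux1 Hwx1 HN) |].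
split; [exact (rpderiv_opp_div_norm2 _ _ _ _ _ _ Huy1 Hwy1 HN) |].
split; [exact (rpderiv_opp_div_norm2 _ _ _ _ _ _ Hux2 Hwx2 HN) |].
split; [exact (rpderiv_opp_div_norm2 _ _ _ _ _ _ Huy2 Hwy2 HN) |].
rewrite Ex1, Ey1, Ex2, Ey2.
repeat split; field; exact HN.
Qed.

Lemma hyperholomorphic_real_quat (U : C * C -> Prop) (u w : C * C -> R) :
  (forall p, U p -> real_cauchy_fueter u w p) ->
  hyperholomorphic_on U (fun p => real_quat (u p) (w p)).
Proof. intros H p Hp; exact (CF_op_real_cauchy_fueter u w p (H p Hp)). Qed.

Lemma hyperholomorphic_qinv_real_quat (u w : C * C -> R) :
  (forall p, real_quat (u p) (w p) <> (RtoC 0, RtoC 0) -> real_cauchy_fueter u w p) ->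
  hyperholomorphic_on (fun p => real_quat (u p) (w p) <> (RtoC 0, RtoC 0))
    (fun p => qinv (real_quat (u p) (w p))).
Proof.
intro H.
rewrite (functional_extensionality _ _ (fun p => qinv_real_quat (u p) (w p))).
apply hyperholomorphic_real_quat; intros p Hp.
apply real_cauchy_fueter_inv; [now apply H | now apply real_quat_neq0].
Qed.

Definition re_affine (c1 c2 c0 : R) (q : C * C) : R := c1 * fst (fst q) + c2 * fst (snd q) + c0.

Lemma rpderiv_re_affine (c1 c2 c0 : R) (p v : C * C) :
  rpderiv (re_affine c1 c2 c0) p v (c1 * fst (fst v) + c2 * fst (snd v)).
Proof. unfold rpderiv, re_affine, line; simpl; auto_derive; [trivial | ring]. Qed.

Lemma real_cauchy_fueter_re_affine (c1 c2 c0 d0 : R) (p : C * C) :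
  real_cauchy_fueter (re_affine c1 c2 c0) (re_affine (- c2) c1 d0) p.
Proof.
do 8 eexists.
do 8 (split; [apply rpderiv_re_affine |]).
simpl; repeat split; ring.
Qed.

Theorem proposition3p3 (A B : R) :
  let f : C * C -> quat := fun p =>
    (Cplus (Cplus (Cplus (Cplus (fst p) (Cconj (fst p))) (snd p)) (Cconj (snd p))) (RtoC A),
     Cplus (Cplus (Cplus (Cminus (Copp (fst p)) (Cconj (fst p))) (snd p)) (Cconj (snd p))) (RtoC B)) in
  hyperholomorphic_on (fun _ => True) f /\
  hyperholomorphic_on (fun p => f p <> (RtoC 0, RtoC 0)) (fun p => qinv (f p)) /\
  (A = 0%R -> B = 0%R ->
     forall p : C * C, f p = (RtoC 0, RtoC 0) <-> (fst (fst p) = 0%R /\ fst (snd p) = 0%R)).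
Proof.
intro f.
assert (Hf : f = fun q => real_quat (re_affine 2 2 A q) (re_affine (- 2) 2 B q)).
{ apply functional_extensionality; intros [[x1 y1] [x2 y2]].
  unfold f, real_quat, re_affine; simpl.
  f_equal; apply injective_projections; simpl; ring. }
rewrite Hf; split; [|split].
- apply hyperholomorphic_real_quat; intros p _; apply real_cauchy_fueter_re_affine.
- apply hyperholomorphic_qinv_real_quat; intros p _; apply real_cauchy_fueter_re_affine.
- intros -> -> p; rewrite real_quat_eq0; unfold re_affine; lra.
Qed.
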